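(* Let $\mathbb{P}$ be the set of primes and $(-)^d=\operatorname{Hom}_{\mathbb{Z}}(-,\prod_{p\in\mathbb{P}}\mathbb{Z}(p^\infty))$ on abelian groups. Let $M=\langle \tfrac1p \mid p\in\mathbb{P}\rangle\le\mathbb{Q}$ and let $0\to F_{-1}\xrightarrow{\zeta}F_0\to M\to 0$ be a free resolution of $M$. Then $M^d\cong\prod_{p\in\mathbb{P}}\mathbb{Z}(p^\infty)$, $M^d$ is cosilting with respect to $\zeta^d:F_0^d\to F_{-1}^d$, but $M$ is not partial silting (with respect to any projective presentation), since $\operatorname{Ext}^1_{\mathbb{Z}}(M,M)\neq 0$.
   Context: $\mathbb{Z}(p^\infty)$ is the Prüfer $p$-group. For a homomorphism $\zeta:Q_0\to Q_1$, $\mathcal{B}_\zeta=\{X \mid \operatorname{Hom}(X,\zeta)\text{ is an epimorphism}\}$; a module $T$ with injective copresentation $0\to T\to Q_0\xrightarrow{\zeta}Q_1$ ($Q_0,Q_1$ injective) is cosilting with respect to $\zeta$ if $\operatorname{Cogen}(T)=\mathcal{B}_\zeta$, with $\operatorname{Cogen}(T)$ the class of modules embeddable in a direct product of copies of $T$. For $\sigma:P_1\to P_0$ a projective presentation of $M$, $\mathcal{D}_\sigma=\{Y\mid\operatorname{Hom}(\sigma,Y)\text{ is an epimorphism}\}$, and $M$ is partial silting with respect to $\sigma$ if $M\in\mathcal{D}_\sigma$ and $\mathcal{D}_\sigma$ is closed under direct sums. *)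

From HB Require Import structures.
From mathcomp Require Import all_boot all_order all_algebra.
From mathcomp Require Import boolp classical_sets functions.
Set Implicit Arguments. Unset Strict Implicit. Unset Printing Implicit Defensive.
Import Order.TTheory GRing.Theory Num.Theory.
Local Open Scope ring_scope.

Record zclosed (V : zmodType) (P : V -> Prop) : Prop := ZClosed {
  zcl0 : P 0; zclB : forall x y, P x -> P y -> P (x - y) }.

Record subg (V : zmodType) (P : V -> Prop) (h : zclosed P) : Type :=
  SubG { sgval : V; sgprop : P sgval }.

HB.instance Definition _ (V : zmodType) (P : V -> Prop) (h : zclosed P) :=
  gen_eqMixin (subg h).
HB.instance Definition _ (V : zmodType) (P : V -> Prop) (h : zclosed P) :=
  gen_choiceMixin (subg h).

Lemma subg_inj (V : zmodType) (P : V -> Prop) (h : zclosed P) (x y : subg h) :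
  sgval x = sgval y -> x = y.
Proof.
case: x y => x px [y py] /= exy; subst y; congr SubG; exact: Prop_irrelevance.
Qed.

Definition subg0 (V : zmodType) (P : V -> Prop) (h : zclosed P) : subg h :=
  SubG h (zcl0 h).
Lemma zclN (V : zmodType) (P : V -> Prop) (h : zclosed P) x : P x -> P (- x).
Proof. by move=> px; rewrite -sub0r; apply: zclB => //; exact: zcl0. Qed.
Lemma zclD (V : zmodType) (P : V -> Prop) (h : zclosed P) x y :
  P x -> P y -> P (x + y).
Proof. by move=> px py; rewrite -[y]opprK; apply: zclB => //; exact: zclN. Qed.
Definition subgN (V : zmodType) (P : V -> Prop) (h : zclosed P) (x : subg h) :
  subg h := SubG h (zclN h (sgprop x)).
Definition subgD (V : zmodType) (P : V -> Prop) (h : zclosed P) (x y : subg h) :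
  subg h := SubG h (zclD h (sgprop x) (sgprop y)).

Lemma subgDA (V : zmodType) (P : V -> Prop) (h : zclosed P) :
  associative (@subgD V P h).
Proof. by move=> x y z; apply: subg_inj; rewrite /= addrA. Qed.
Lemma subgDC (V : zmodType) (P : V -> Prop) (h : zclosed P) :
  commutative (@subgD V P h).
Proof. by move=> x y; apply: subg_inj; rewrite /= addrC. Qed.
Lemma subg0D (V : zmodType) (P : V -> Prop) (h : zclosed P) :
  left_id (subg0 h) (@subgD V P h).
Proof. by move=> x; apply: subg_inj; rewrite /= add0r. Qed.
Lemma subgND (V : zmodType) (P : V -> Prop) (h : zclosed P) :
  left_inverse (subg0 h) (@subgN V P h) (@subgD V P h).
Proof. by move=> x; apply: subg_inj; rewrite /= addNr. Qed.

HB.instance Definition _ (V : zmodType) (P : V -> Prop) (h : zclosed P) :=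
  GRing.isZmodule.Build (subg h) (@subgDA V P h) (@subgDC V P h)
    (@subg0D V P h) (@subgND V P h).

Lemma hom_closed (A B : zmodType) :
  zclosed (fun f : A -> B => GRing.zmod_morphism f).
Proof.
split; first by move=> x y /=; rewrite subr0.
move=> f g hf hg x y.
have E : forall z, (f - g) z = f z - g z by [].
by rewrite !E hf hg !opprD addrACA.
Qed.

Definition Hom (A B : zmodType) : zmodType := subg (hom_closed A B).

(* ---------- Q/Z, represented by the rationals in [0,1) ---------- *)
Definition frac (x : rat) : rat := x - (Num.floor x)%:~R.

Lemma frac_range x : 0 <= frac x < 1.
Proof.
rewrite /frac subr_ge0 floor_le /= ltrBlDr.
by have := floorD1_gt x; rewrite intrD addrC.
Qed.

Lemma fracDz x (n : int) : frac (x + n%:~R) = frac x.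
Proof.
rewrite /frac floorDrz ?intr_int // intrKfloor intrD opprD addrA.
by rewrite addrAC addrK.
Qed.

Lemma frac_id x : 0 <= x < 1 -> frac x = x.
Proof.
move=> /andP[x0 x1]; rewrite /frac (@floor_def _ x 0) ?subr0 //.
by rewrite x0 add0r.
Qed.

Lemma fracDl x y : frac (frac x + y) = frac (x + y).
Proof.
have -> : frac x + y = (x + y) + (- Num.floor x)%:~R.
  by rewrite /frac intrN addrAC.
by rewrite fracDz.
Qed.

Record qz : Type := QZ { qval : rat; qprop : 0 <= qval < 1 }.
HB.instance Definition _ := gen_eqMixin qz.
HB.instance Definition _ := gen_choiceMixin qz.

Lemma qz_inj (x y : qz) : qval x = qval y -> x = y.
Proof.
case: x y => x px [y py] /= exy; subst y; congr QZ; exact: Prop_irrelevance.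
Qed.

Definition qz0 : qz := @QZ 0 (introT andP (conj (lexx 0) ltr01)).
Definition qzN (x : qz) : qz := QZ (frac_range (- qval x)).
Definition qzD (x y : qz) : qz := QZ (frac_range (qval x + qval y)).

Lemma qzDA : associative qzD.
Proof.
move=> x y z; apply: qz_inj => /=.
by rewrite [in LHS]addrC !fracDl addrC addrA.
Qed.
Lemma qzDC : commutative qzD.
Proof. by move=> x y; apply: qz_inj; rewrite /= addrC. Qed.
Lemma qz0D : left_id qz0 qzD.
Proof. by move=> x; apply: qz_inj; rewrite /= add0r frac_id // qprop. Qed.
Lemma qzND : left_inverse qz0 qzN qzD.
Proof.
move=> x; apply: qz_inj => /=; by rewrite fracDl addNr frac_id // lexx ltr01.
Qed.

HB.instance Definition _ := GRing.isZmodule.Build qz qzDA qzDC qz0D qzND.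

Definition in_pruefer (p : nat) (x : qz) : Prop :=
  exists k : nat, qval x * (p ^ k)%:R \is a Num.int.

Lemma frac_int x : (x - frac x) \is a Num.int.
Proof. by rewrite /frac opprB addrC subrK intr_int. Qed.

Lemma pruefer_closed (p : nat) : zclosed (in_pruefer p).
Proof.
split; first by exists 0%N; rewrite /= mul0r int_num0.
move=> x y [a ha] [b hb]; exists (a + b)%N.
have -> : qval (x - y) = frac (qval x - qval y).
  by rewrite /= addrC fracDl addrC.
set u := qval x - qval y.
have -> : frac u = u - (u - frac u) by rewrite opprB addrC subrK.
have nat_int : forall n : nat, (n%:R : rat) \is a Num.int.
  by move=> n; rewrite -[n%:R]/((n%:Z)%:~R); exact: intr_int.
rewrite mulrBl; apply: rpredB; last by apply: rpredM => //; exact: frac_int.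
rewrite /u mulrBl expnD natrM; apply: rpredB.
  by rewrite mulrA; apply: rpredM.
by rewrite [(p ^ a)%:R * _]mulrC mulrA; apply: rpredM.
Qed.

Definition primes_t : Type := {p : nat | prime p}.

Lemma pruefer_prod_closed :
  zclosed (fun f : primes_t -> qz => forall p : primes_t, in_pruefer (sval p) (f p)).
Proof.
split=> [p | f g hf hg p]; first exact: (zcl0 (pruefer_closed (sval p))).
exact: (zclB (pruefer_closed (sval p)) (hf p) (hg p)).
Qed.

Definition PrueferProd : zmodType := subg pruefer_prod_closed.

Definition dual (A : zmodType) : zmodType := Hom A PrueferProd.

Lemma comp_zmod_morphism (A B C : zmodType) (f : A -> B) (g : B -> C) :
  GRing.zmod_morphism f -> GRing.zmod_morphism g -> GRing.zmod_morphism (g \o f).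
Proof. by move=> hf hg x y /=; rewrite hf hg. Qed.

Definition dualmap (A B : zmodType) (f : A -> B) (hf : GRing.zmod_morphism f)
  (g : dual B) : dual A :=
  @SubG _ _ (hom_closed A PrueferProd) (sgval g \o f)
        (comp_zmod_morphism hf (sgprop g)).

Definition genM (q : rat) : Prop :=
  exists s : seq (int * nat),
    all (fun x => prime x.2) s /\ q = \sum_(x <- s) (x.1)%:~R / (x.2)%:R.

Lemma genM_closed : zclosed genM.
Proof.
split; first by exists [::]; rewrite big_nil.
move=> x y [s [hs ->]] [t [ht ->]].
exists (s ++ map (fun z => (- z.1, z.2)) t); split.
  by rewrite all_cat hs /= all_map.
rewrite big_cat big_map /= -sumrN; congr (_ + _); apply: eq_bigr => z _.
by rewrite intrN mulNr.
Qed.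

Definition Mgrp : zmodType := subg genM_closed.

Definition epi_ab (A B : Type) (f : A -> B) : Prop := forall y, exists x, f x = y.

Definition isoAb (A B : zmodType) : Prop :=
  exists f : A -> B, GRing.zmod_morphism f /\ bijective f.

Definition free_ab (F : zmodType) : Prop :=
  exists (I : Type) (b : I -> F),
    forall (G : zmodType) (g : I -> G),
      exists! f : F -> G, GRing.zmod_morphism f /\ forall i, f (b i) = g i.

Definition injective_ab (Q : zmodType) : Prop :=
  forall (A B : zmodType) (i : A -> B) (g : A -> Q),
    GRing.zmod_morphism i -> injective i -> GRing.zmod_morphism g ->
    exists h : B -> Q, GRing.zmod_morphism h /\ forall a, h (i a) = g a.

Definition projective_ab (P : zmodType) : Prop :=
  forall (A B : zmodType) (q : A -> B) (g : P -> B),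
    GRing.zmod_morphism q -> epi_ab q -> GRing.zmod_morphism g ->
    exists h : P -> A, GRing.zmod_morphism h /\ forall x, q (h x) = g x.

(* Cogen(T): X embeds in a direct product T^I, i.e. there is a family of
   homomorphisms X -> T which is jointly injective *)
Definition Cogen (T X : zmodType) : Prop :=
  exists (I : Type) (f : I -> X -> T),
    (forall i, GRing.zmod_morphism (f i)) /\
    (forall x y, (forall i, f i x = f i y) -> x = y).

Definition B_class (Q0 Q1 : zmodType) (zeta : Q0 -> Q1) (X : zmodType) : Prop :=
  forall g : X -> Q1, GRing.zmod_morphism g ->
    exists h : X -> Q0, GRing.zmod_morphism h /\ forall x, zeta (h x) = g x.

Definition inj_copresentation (T Q0 Q1 : zmodType) (iota : T -> Q0)
  (zeta : Q0 -> Q1) : Prop :=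
  [/\ GRing.zmod_morphism iota, GRing.zmod_morphism zeta, injective iota,
      (forall y, zeta y = 0 <-> exists t, iota t = y) &
      injective_ab Q0 /\ injective_ab Q1].

Definition cosilting_wrt (T Q0 Q1 : zmodType) (iota : T -> Q0)
  (zeta : Q0 -> Q1) : Prop :=
  inj_copresentation iota zeta /\
  forall X : zmodType, Cogen T X <-> B_class zeta X.

Definition proj_presentation (P1 P0 N : zmodType) (sigma : P1 -> P0) : Prop :=
  [/\ projective_ab P1, projective_ab P0, GRing.zmod_morphism sigma &
      exists pi : P0 -> N, [/\ GRing.zmod_morphism pi, epi_ab pi &
                               forall y, pi y = 0 <-> exists x, sigma x = y]].

Definition D_class (P1 P0 : zmodType) (sigma : P1 -> P0) (Y : zmodType) : Prop :=
  forall h : P1 -> Y, GRing.zmod_morphism h ->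
    exists g : P0 -> Y, GRing.zmod_morphism g /\ forall x, g (sigma x) = h x.

Definition is_dsum (I : Type) (Y : I -> zmodType) (S : zmodType)
  (inj : forall i, Y i -> S) : Prop :=
  (forall i, GRing.zmod_morphism (inj i)) /\
  forall (G : zmodType) (g : forall i, Y i -> G),
    (forall i, GRing.zmod_morphism (g i)) ->
    exists! u : S -> G, GRing.zmod_morphism u /\
                        forall i (y : Y i), u (inj i y) = g i y.

Definition closed_dsums (C : zmodType -> Prop) : Prop :=
  forall (I : Type) (Y : I -> zmodType) (S : zmodType) (inj : forall i, Y i -> S),
    is_dsum inj -> (forall i, C (Y i)) -> C S.

Definition partial_silting_wrt (N P1 P0 : zmodType) (sigma : P1 -> P0) : Prop :=
  D_class sigma N /\ closed_dsums (D_class sigma).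

(* Ext^1_Z(N, N') computed from a projective (free) resolution
   0 -> F1 --zeta--> F0 -> N -> 0 : it is Hom(F1,N') / image of Hom(zeta,N').
   Ext1_nonzero says this cokernel is nonzero. *)
Definition Ext1_nonzero (F1 F0 N' : zmodType) (zeta : F1 -> F0) : Prop :=
  exists h : F1 -> N', GRing.zmod_morphism h /\
    ~ exists g : F0 -> N', GRing.zmod_morphism g /\ forall x, g (zeta x) = h x.

(* D = prod_p Z(p^oo) is divisible, hence injective (Baer), and it cogenerates:
   an element of order n > 1 (or of infinite order) is sent by some
   homomorphism to the element 1/p of the p-th factor, p | n.  Evaluating
   f in M^d at the generators 1/q identifies M^d with D: the p-component of
   f(1/q) is killed by a power of p and by q, since q f(1/q) = f(1) = p f(1/p).
   Thus T = M^d is an injective cogenerator, so its copresentation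
   0 -> T -> F0^d -> F1^d splits, and Cogen(T) and B_(zeta^d) both consist of
   all groups.
   The subgroup E of Q x Q generated by M x 0 and the (1/p^2, 1/p) is an
   extension of M by M that does not split: a section would send 1 to some
   (r, 1) with r/p - 1/p^2 in M for every prime p, which fails once p exceeds
   the denominator of r.  Every projective presentation of M lifts to E, so
   M is not in D_sigma, and Ext^1(M, M) <> 0. *)

From Pilot Require Import Defs.
From HB Require Import structures.
From mathcomp Require Import all_boot all_order all_algebra ring.
From mathcomp Require Import boolp classical_sets functions.
Set Implicit Arguments. Unset Strict Implicit. Unset Printing Implicit Defensive.
Import Order.TTheory GRing.Theory Num.Theory.
Local Open Scope ring_scope.
Local Notation frac := Defs.frac.
Local Notation Hom := Defs.Hom.
Local Notation dual := Defs.dual.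

Section ZmodMorphism.
Variables (A B : zmodType) (f : A -> B) (hf : GRing.zmod_morphism f).
(* kept local: globally, any function would be inferred additive, leaving the
   proof of additivity as an unresolved evar *)
#[local] HB.instance Definition _ := GRing.isZmodMorphism.Build A B f hf.

Lemma zmorph0 : f 0 = 0. Proof. exact: raddf0. Qed.
Lemma zmorphMn x n : f (x *+ n) = f x *+ n. Proof. exact: raddfMn. Qed.
End ZmodMorphism.

Lemma subrACA (V : zmodType) (a b c d : V) : (a - b) - (c - d) = (a - c) - (b - d).
Proof. by rewrite !opprD !opprK addrACA [- b + d]addrC. Qed.

Section Subgroup.
Variables (V : zmodType) (P : V -> Prop) (h : zclosed P).
HB.instance Definition _ :=
  GRing.isZmodMorphism.Build (subg h) V (@sgval V P h) (fun _ _ => erefl).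

Lemma sgvalMn (x : subg h) n : sgval (x *+ n) = sgval x *+ n.
Proof. exact: raddfMn. Qed.
Lemma sgvalMz (x : subg h) k : sgval (x *~ k) = sgval x *~ k.
Proof. exact: raddfMz. Qed.
End Subgroup.

Lemma zclosedMz (V : zmodType) (P : V -> Prop) (h : zclosed P) x k :
  P x -> P (x *~ k).
Proof. by move=> Px; have := sgprop (SubG h Px *~ k); rewrite sgvalMz. Qed.

Lemma pairMz (U V : zmodType) (x : U) (d : V) k : (x, d) *~ k = (x *~ k, d *~ k).
Proof.
by apply: injective_projections; [exact: (raddfMz fst) | exact: (raddfMz snd)].
Qed.

Lemma int_subgroup_dvd (P : int -> Prop) :
  P 0 -> (forall a b, P a -> P b -> P (a - b)) ->
  exists n : nat, P n /\ forall k, P k -> (n %| k)%Z.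
Proof.
move=> P0 PB; have hP : zclosed P by split.
have PM k m : P k -> P (k * m) by move=> Pk; rewrite -mulrzz; exact: zclosedMz.
have [[k [k0 Pk]]|only0] := pselect (exists k, k != 0 /\ P k); last first.
  exists 0%N; split=> // k Pk; rewrite dvd0z; apply: contrapT => /negP k0.
  exact: only0 (ex_intro _ k (conj k0 Pk)).
have exn : exists n, (0 < n)%N && `[< P n >].
  exists `|k|%N; rewrite absz_gt0 k0; apply/asboolP.
  rewrite abszE; have [/ger0_norm ->|/ltr0_norm ->] // := lerP 0 k.
  by rewrite -sub0r; exact: PB.
have [n /andP[n0 /asboolP Pn] nmin] := ex_minnP exn.
exists n; split=> // m Pm; apply/dvdz_mod0P/eqP; apply: contraT => r0.
have nz : n%:Z != 0 by rewrite eqz_nat -lt0n.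
have Pr : P (m %% n)%Z.
  have -> : (m %% n)%Z = m - (m %/ n)%Z * n by rewrite {2}(divz_eq m n) addrAC subrr add0r.
  by apply: PB => //; rewrite mulrC; exact: PM.
have : (n <= `|(m %% n)%Z|)%N.
  by apply: nmin; rewrite absz_gt0 r0 gez0_abs ?modz_ge0 //=; exact/asboolP.
by rewrite -lez_nat gez0_abs ?modz_ge0 // leNgt ltz_pmod // ltz_nat.
Qed.

Definition mkHom (A B : zmodType) (f : A -> B) (hf : GRing.zmod_morphism f) : Hom A B :=
  SubG (hom_closed A B) hf.

Lemma Hom_ext (A B : zmodType) (f g : Hom A B) : sgval f =1 sgval g -> f = g.
Proof. by move=> e; apply/subg_inj/funext. Qed.

Lemma zmod_morphism_can (X Y : zmodType) (f : X -> Y) (g : Y -> X) :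
  GRing.zmod_morphism f -> cancel f g -> cancel g f -> GRing.zmod_morphism g.
Proof. by move=> hf fK gK x y; apply: (can_inj fK); rewrite hf !gK. Qed.

Lemma isoAb_sym (X Y : zmodType) : isoAb X Y -> isoAb Y X.
Proof.
move=> [f [hf [g fK gK]]]; exists g; split; last by exists f.
exact: zmod_morphism_can hf fK gK.
Qed.

Lemma factor_through_coker (P1 P0 N G : zmodType) (sigma : P1 -> P0) (pi : P0 -> N)
    (y : P0 -> G) :
  GRing.zmod_morphism pi -> epi_ab pi -> (forall u, pi u = 0 <-> exists x, sigma x = u) ->
  GRing.zmod_morphism y -> (forall x, y (sigma x) = 0) ->
  exists t : N -> G, GRing.zmod_morphism t /\ forall u, t (pi u) = y u.
Proof.
move=> hpi pi_epi kerpi hy y0; have [s sK] := choice pi_epi.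
have y_pi u v : pi u = pi v -> y u = y v.
  move=> e; apply/eqP; rewrite -subr_eq0 -hy; apply/eqP.
  by have /kerpi[x <-] : pi (u - v) = 0 by rewrite hpi e subrr.
exists (y \o s); split=> [a b | u] /=; last by apply: y_pi; rewrite sK.
by rewrite -hy; apply: y_pi; rewrite !hpi !sK.
Qed.

Lemma prime_natr_neq0 {R : numDomainType} (p : nat) : prime p -> (p%:R : R) != 0.
Proof. by move=> pp; rewrite pnatr_eq0 gtn_eqF ?prime_gt0. Qed.

(** * Injective groups and cogenerators *)

Definition divisible (Q : zmodType) : Prop :=
  forall (q : Q) (n : nat), (0 < n)%N -> exists e, e *+ n = q.

Section Baer.
Local Open Scope classical_set_scope.
Variables (Q : zmodType) (A B : zmodType) (i : A -> B) (g : A -> Q).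
Hypotheses (divQ : divisible Q) (hi : GRing.zmod_morphism i) (ii : injective i)
  (hg : GRing.zmod_morphism g).

Definition base_graph : set (B * Q) := fun z => exists a, z = (i a, g a).

(* graphs of additive maps from a subgroup of B to Q extending g along i *)
Definition ext_graph (H : set (B * Q)) : Prop :=
  [/\ base_graph `<=` H, zclosed H & forall x d d', H (x, d) -> H (x, d') -> d = d'].

Lemma ext_graph_base : ext_graph base_graph.
Proof.
split=> //; first split.
- by exists 0; rewrite (zmorph0 hi) (zmorph0 hg).
- by move=> _ _ [a ->] [b ->]; exists (a - b); rewrite hi hg.
- by move=> x d d' [a [-> ->]] [b [/ii -> ->]].
Qed.

Lemma ext_graph_chain (F : set (set (B * Q))) :
  F `<=` (fun X => ext_graph (X `|` base_graph)) -> total_on F subset ->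
  ext_graph ((\bigcup_(X in F) X) `|` base_graph).
Proof.
move=> Fext Ftot; set U := _ `|` _.
have common z w : U z -> U w ->
    exists Z, [/\ ext_graph Z, Z `<=` U, Z z & Z w].
  have sub X : F X -> X `|` base_graph `<=` U.
    by move=> FX u [Xu|bu]; [left; exists X | right].
  case=> [[X FX Xz]|bz] [[Y FY Yw]|bw].
  - have [XY|YX] := Ftot _ _ FX FY.
    + by exists (Y `|` base_graph); split; [exact: Fext|exact: sub|left; exact: XY|left].
    + by exists (X `|` base_graph); split; [exact: Fext|exact: sub|left|left; exact: YX].
  - by exists (X `|` base_graph); split; [exact: Fext|exact: sub|left|right].
  - by exists (Y `|` base_graph); split; [exact: Fext|exact: sub|right|left].
  - by exists base_graph; split=> //; [exact: ext_graph_base | right].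
split; first by move=> z bz; right.
- split; first by right; case: ext_graph_base => _ [].
  move=> z w Uz Uw; have [Z [[_ [_ ZB] _] ZU Zz Zw]] := common z w Uz Uw.
  exact/ZU/ZB.
- move=> x d d' Ud Ud'; have [Z [[_ _ Zfun] _ Zd Zd']] := common _ _ Ud Ud'.
  exact: Zfun Zd Zd'.
Qed.

Section Adjoin.
Variables (H : set (B * Q)) (b : B).
Hypothesis extH : ext_graph H.

Lemma ext_graph_multiples : exists e, forall k d, H (b *~ k, d) -> d = e *~ k.
Proof.
case: extH => _ zH Hfun.
have [n [[dn Hn] ndvd]] : exists n : nat,
    (exists d, H (b *~ n, d)) /\ forall k, (exists d, H (b *~ k, d)) -> (n %| k)%Z.
  apply: (int_subgroup_dvd (P := fun k => exists d, H (b *~ k, d))).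
    by exists 0; rewrite mulr0z; exact: (zcl0 zH).
  move=> k1 k2 [d1 H1] [d2 H2]; exists (d1 - d2).
  by rewrite mulrzBr; exact: (zclB zH H1 H2).
have [e en] : exists e, e *~ n = dn.
  case: n Hn ndvd => [|n] Hn _; last by have [e <-] := divQ dn (ltn0Sn n); exists e.
  exists 0; rewrite mulr0z; change (H (b *~ 0, dn)) in Hn; rewrite mulr0z in Hn.
  exact: (Hfun 0 0 dn (zcl0 zH) Hn).
exists e => k d Hk; have /dvdzP[m km] := ndvd k (ex_intro _ d Hk).
have Hm : H (b *~ k, dn *~ m) by rewrite km mulrC mulrzA -pairMz; exact: zclosedMz.
by rewrite (Hfun _ _ _ Hk Hm) km mulrC mulrzA en.
Qed.

Definition adjoin (e : Q) : set (B * Q) :=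
  fun z => exists x d (k : int), H (x, d) /\ z = (x + b *~ k, d + e *~ k).

Lemma adjoin_sub e : H `<=` adjoin e.
Proof. by move=> [x d] Hxd; exists x, d, 0; rewrite !mulr0z !addr0. Qed.

Lemma adjoin_mem e : adjoin e (b, e).
Proof.
by exists 0, 0, 1; rewrite !add0r !mulr1z; split=> //; case: extH => _ [].
Qed.

Lemma ext_graph_adjoin : exists e, ext_graph (adjoin e).
Proof.
have [e He] := ext_graph_multiples; case: extH => bH zH Hfun.
exists e; split; first exact: subset_trans (adjoin_sub e).
- split; first exact: adjoin_sub (zcl0 zH).
  move=> _ _ [x [d [k [Hxd ->]]]] [x' [d' [k' [Hxd' ->]]]].
  exists (x - x'), (d - d'), (k - k'); split; first exact: (zclB zH Hxd Hxd').
  by apply: injective_projections => /=; rewrite mulrzBr opprD addrACA.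
- move=> y d1 d2 [x [d [k [Hxd [Ey ->]]]]] [x' [d' [k' [Hxd' [Ey' ->]]]]].
  have Hdiff : H (b *~ (k' - k), d - d').
    have -> : b *~ (k' - k) = x - x'.
      have E : x + b *~ k = x' + b *~ k' by rewrite -Ey -Ey'.
      by apply/eqP; rewrite mulrzBr subr_eq addrAC E addrAC subrr add0r.
    exact: (zclB zH Hxd Hxd').
  have := He _ _ Hdiff; rewrite mulrzBr => Ed.
  by rewrite -(subrK d' d) Ed addrAC subrK addrC.
Qed.
End Adjoin.

Lemma ext_graph_maximal_total (H : set (B * Q)) : ext_graph H ->
  (forall H', ext_graph H' -> H `<=` H' -> H' `<=` H) -> forall b, exists d, H (b, d).
Proof.
move=> extH Hmax b; have [e exte] := ext_graph_adjoin b extH.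
by exists e; apply: Hmax exte (adjoin_sub _ _) _ (adjoin_mem _ extH e).
Qed.

Lemma ext_graph_maximal_exists : exists H, ext_graph H /\
  forall H', ext_graph H' -> H `<=` H' -> H' `<=` H.
Proof.
have [X [extX Xmax]] := Zorn_bigcup ext_graph_chain.
exists (X `|` base_graph); split=> // H' extH' XH' z H'z.
apply: contrapT => nXz; apply: (Xmax H'); last first.
  have -> // : H' `|` base_graph = H'.
  by apply/seteqP; split=> u; [case=> //; case: extH' => + _ _; apply | left].
split; first by move=> u Xu; apply: XH'; left.
by move=> /(_ z H'z) Xz; apply: nXz; left.
Qed.

Lemma divisible_extend :
  exists h : B -> Q, GRing.zmod_morphism h /\ forall a, h (i a) = g a.
Proof.
have [H [extH Hmax]] := ext_graph_maximal_exists.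
have [h Hh] := choice (ext_graph_maximal_total extH Hmax).
case: extH => bH [_ HB] Hfun; exists h; split.
- by move=> x y; apply: Hfun (Hh (x - y)) _; exact: HB (Hh x) (Hh y).
- by move=> a; apply: Hfun (Hh (i a)) _; apply: bH; exists a.
Qed.
End Baer.

Lemma divisible_injective (Q : zmodType) : divisible Q -> injective_ab Q.
Proof. by move=> divQ A B i g hi ii hg; exact: divisible_extend. Qed.

Lemma injective_ab_iso (X Y : zmodType) : isoAb X Y -> injective_ab X -> injective_ab Y.
Proof.
move=> isoXY injX A B i g hi ii hg.
have [f [hf [f' fK f'K]]] := isoXY; have hf' := zmod_morphism_can hf fK f'K.
have [h [hh eh]] := injX A B i (f' \o g) hi ii (comp_zmod_morphism hg hf').
exists (f \o h); split; first exact: comp_zmod_morphism.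
by move=> a /=; rewrite eh /= f'K.
Qed.

Lemma injective_extend_cyclic (T X : zmodType) (x : X) (d : T) : injective_ab T ->
  (forall k, x *~ k = 0 -> d *~ k = 0) ->
  exists chi : X -> T, GRing.zmod_morphism chi /\ chi x = d.
Proof.
move=> injT ann.
have cyc : zclosed (fun y : X => exists k, y = x *~ k).
  split; first by exists 0; rewrite mulr0z.
  by move=> _ _ [a ->] [b ->]; exists (a - b); rewrite mulrzBr.
have [kk kkP] := choice (fun y : subg cyc => sgprop y).
have d_wd a b : x *~ a = x *~ b -> d *~ a = d *~ b.
  move=> e; apply/eqP; rewrite -subr_eq0 -mulrzBr; apply/eqP/ann.
  by rewrite mulrzBr e subrr.
have hg : GRing.zmod_morphism (fun y => d *~ kk y).
  by move=> y z; rewrite -mulrzBr; apply: d_wd; rewrite mulrzBr -!kkP.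
have [chi [hchi chiP]] :=
  injT _ X (@sgval _ _ cyc) _ (fun _ _ => erefl) (@subg_inj _ _ cyc) hg.
exists chi; split=> //.
pose x1 := SubG cyc (ex_intro _ 1 (esym (mulr1z x))).
have := chiP x1 => /= ->; rewrite -[RHS]mulr1z; apply: d_wd.
by rewrite mulr1z -[RHS]/(sgval x1) kkP.
Qed.

Definition cogenerator_ab (T : zmodType) : Prop :=
  forall (X : zmodType) (x : X), x != 0 ->
    exists chi : X -> T, GRing.zmod_morphism chi /\ chi x != 0.

Lemma cogenerator_ab_iso (X Y : zmodType) :
  isoAb X Y -> cogenerator_ab X -> cogenerator_ab Y.
Proof.
move=> [f [hf [f' fK _]]] cogX Z z z0; have [chi [hchi chi_z]] := cogX Z z z0.
exists (f \o chi); split; first exact: comp_zmod_morphism.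
by apply: contra chi_z => /eqP /= fchi; rewrite -(fK (chi z)) fchi -(zmorph0 hf) fK.
Qed.

Section FreeGroup.
Variables (F : zmodType) (I : Type) (b : I -> F).
Hypothesis bF : forall (G : zmodType) (g : I -> G),
  exists! f : F -> G, GRing.zmod_morphism f /\ forall i, f (b i) = g i.

Lemma free_morph_eq (G : zmodType) (f1 f2 : F -> G) :
  GRing.zmod_morphism f1 -> GRing.zmod_morphism f2 -> (forall i, f1 (b i) = f2 (b i)) ->
  f1 = f2.
Proof.
move=> hf1 hf2 e; have [f [_ uf]] := bF (fun i => f2 (b i)).
by rewrite -(uf f1 (conj hf1 e)) -(uf f2 (conj hf2 (fun i => erefl))).
Qed.
End FreeGroup.

Lemma free_projective (F : zmodType) : free_ab F -> projective_ab F.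
Proof.
move=> [I [b bF]] A B q g hq q_epi hg.
have [a qa] := choice (fun i => q_epi (g (b i))).
have [h [[hh hb] _]] := bF A a; exists h; split=> // x.
suff /(congr1 (fun f => f x)) : q \o h = g by [].
by apply: (free_morph_eq bF) => // [|i]; [exact: comp_zmod_morphism | rewrite /= hb qa].
Qed.

(* Hom(F, Q) is a product of copies of Q indexed by a basis of F *)
Lemma hom_free_injective (F Q : zmodType) :
  free_ab F -> injective_ab Q -> injective_ab (Hom F Q).
Proof.
move=> [I [b bF]] injQ A B i g hi ii hg.
have hgb j : GRing.zmod_morphism (fun a => sgval (g a) (b j)).
  by move=> x y; rewrite hg.
have [hb hbP] := choice (fun j => injQ A B i _ hi ii (hgb j)).
have ext x : exists f : F -> Q,
    GRing.zmod_morphism f /\ forall j, f (b j) = hb j x.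
  by have [f [fP _]] := bF Q (hb^~ x); exists f.
have [phi phiP] := choice ext.
exists (fun x => mkHom (phiP x).1); split.
- move=> x y; apply: subg_inj => /=; apply: (free_morph_eq bF).
  + exact: (phiP (x - y)).1.
  + exact: (zclB (hom_closed F Q) (phiP x).1 (phiP y).1).
  + by move=> j; rewrite (phiP _).2 (hbP j).1 -!(phiP _).2.
- move=> a; apply: subg_inj => /=; apply: (free_morph_eq bF).
  + exact: (phiP (i a)).1.
  + exact: sgprop.
  + by move=> j; rewrite (phiP _).2 (hbP j).2.
Qed.

Section SplitOfDClass.
Variables (P1 P0 N K E : zmodType) (sigma : P1 -> P0) (pi : P0 -> N).
Variables (j : K -> E) (q : E -> N).
Hypotheses (hsigma : GRing.zmod_morphism sigma) (hpi : GRing.zmod_morphism pi).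
Hypotheses (pi_epi : epi_ab pi) (ker_pi : forall y, pi y = 0 <-> exists x, sigma x = y).
Hypotheses (hj : GRing.zmod_morphism j) (hq : GRing.zmod_morphism q) (j_inj : injective j).
Hypotheses (ker_q : forall e, q e = 0 -> exists k, j k = e) (qj : forall k, q (j k) = 0).

(* Hom(sigma, K) onto means Ext^1(N, K) = 0, so an extension of N by K through
   which pi lifts must split *)
Lemma split_of_D_class :
  D_class sigma K ->
  (exists g : P0 -> E, GRing.zmod_morphism g /\ forall x, q (g x) = pi x) ->
  exists s : N -> E, GRing.zmod_morphism s /\ forall n, q (s n) = n.
Proof.
move=> Dsigma [g [hg gK]].
have in_ker x : exists k, j k = g (sigma x).
  by apply: ker_q; rewrite gK; apply/ker_pi; exists x.
have [h hP] := choice in_ker.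
have hh : GRing.zmod_morphism h by move=> x y; apply: j_inj; rewrite hj !hP hsigma hg.
have [g' [hg' g'P]] := Dsigma h hh.
pose y u := g u - j (g' u).
have hy : GRing.zmod_morphism y.
  by move=> u v; rewrite /y hg hg' hj subrACA.
have y_sigma x : y (sigma x) = 0 by rewrite /y g'P hP subrr.
have [t [ht tP]] := factor_through_coker hpi pi_epi ker_pi hy y_sigma.
exists t; split=> // n; have [u <-] := pi_epi n.
by rewrite tP /y hq gK qj subr0.
Qed.
End SplitOfDClass.

Lemma injective_kernel_split (T Q0 Q1 : zmodType) (iota : T -> Q0) (zeta : Q0 -> Q1) :
  inj_copresentation iota zeta -> epi_ab zeta -> injective_ab T ->
  exists s : Q1 -> Q0, GRing.zmod_morphism s /\ forall y, zeta (s y) = y.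
Proof.
move=> [hiota hzeta iota_inj ker_zeta _] zeta_epi injT.
have [r [hr rK]] := injT T Q0 iota id hiota iota_inj (fun _ _ => erefl).
have hu : GRing.zmod_morphism (fun y => y - iota (r y)).
  by move=> a b; rewrite hr hiota subrACA.
have u_iota t : iota t - iota (r (iota t)) = 0 by rewrite rK subrr.
have [s [hs sP]] := factor_through_coker hzeta zeta_epi ker_zeta hu u_iota.
have zeta_iota t : zeta (iota t) = 0 by apply/ker_zeta; exists t.
exists s; split=> // y; have [x <-] := zeta_epi y.
by rewrite sP hzeta zeta_iota subr0.
Qed.

Lemma cosilting_of_injective_cogenerator (T Q0 Q1 : zmodType) (iota : T -> Q0)
    (zeta : Q0 -> Q1) :
  inj_copresentation iota zeta -> epi_ab zeta -> injective_ab T -> cogenerator_ab T ->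
  cosilting_wrt iota zeta.
Proof.
move=> copres zeta_epi injT cogT; split=> // X; split=> _.
  have [s [hs sK]] := injective_kernel_split copres zeta_epi injT.
  move=> g hg; exists (s \o g).
  by split=> [|x /=]; [exact: comp_zmod_morphism | rewrite sK].
exists (Hom X T), (fun chi => sgval chi); split=> [chi|x y exy]; first exact: sgprop.
apply/eqP; rewrite -subr_eq0; apply: contraT => /cogT[chi [hchi]].
by have /= exy_chi := exy (mkHom hchi); rewrite hchi exy_chi subrr eqxx.
Qed.

(** * The product of the Prüfer groups *)

Lemma fracDr x y : frac (x + frac y) = frac (x + y).
Proof. by rewrite addrC fracDl addrC. Qed.

Lemma qvalMn (x : qz) n : qval (x *+ n) = frac (qval x * n%:R).
Proof.
elim: n => [|n IH]; first by rewrite mulr0 frac_id // lexx ltr01.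
by rewrite mulrS /= IH fracDr mulrSr mulrDr mulr1 addrC.
Qed.

Lemma pruefer_divisible (p : nat) (x : qz) (n : nat) : prime p -> (0 < n)%N ->
  in_pruefer p x -> exists y, in_pruefer p y /\ y *+ n = x.
Proof.
move=> pp n0 [k /intrP[z Ez]].
have [m cpm En] := pfactor_coprime pp n0; set s := logn p n in En.
have [[u v] /= Euv] : exists uv : int * int, uv.1 * m + uv.2 * (p ^ k)%N = 1.
  by apply/coprimezP; rewrite coprimezE /= coprime_sym coprimeXl.
have pX_neq0 j : ((p ^ j)%:R : rat) != 0 by rewrite pnatr_eq0 -lt0n expn_gt0 prime_gt0.
(* n w = x - v z, because n = m p^s and u m = 1 - v p^k *)
set w : rat := (u * z)%:~R / ((p ^ k)%:R * (p ^ s)%:R).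
have wr : 0 <= frac w < 1 := frac_range w.
exists (QZ wr); split.
  exists (k + s)%N; rewrite /= /frac mulrBl expnD natrM; apply: rpredB.
    by rewrite /w mulfVK ?mulf_neq0 // intr_int.
  by rewrite -natrM rpredM ?natr_int ?intr_int.
apply: qz_inj; rewrite qvalMn /=.
have -> : frac w * n%:R = w * n%:R + (- (Num.floor w * n%:Z))%:~R.
  by rewrite /frac mulrBl intrN intrM.
rewrite fracDz.
have -> : w * n%:R = qval x + (- (v * z))%:~R.
  have Eu : (u%:~R * m%:R : rat) = 1 - v%:~R * (p ^ k)%:R.
    apply/eqP; rewrite eq_sym subr_eq; apply/eqP.
    by have := congr1 (fun t : int => (t%:~R : rat)) Euv; rewrite /= intrD !intrM.
  have Ex : qval x = z%:~R / (p ^ k)%:R by rewrite -Ez mulfK.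
  rewrite Ex /w En natrM intrN !intrM.
  transitivity ((u%:~R * m%:R) * z%:~R / (p ^ k)%:R : rat).
    by field; rewrite !pX_neq0.
  by rewrite Eu; field.
by rewrite fracDz frac_id // qprop.
Qed.

Lemma int_num_01 {R : archiNumDomainType} (x : R) : x \is a Num.int -> 0 <= x < 1 -> x = 0.
Proof.
move=> /intrP[m ->]; rewrite ler0z ltrz1 => /andP[m0 m1].
by have -> : m = 0 by apply/eqP; rewrite eq_le m0 andbT -ltzD1 add0r.
Qed.

Lemma pruefer_coprime_torsion (p q : nat) (x : qz) : coprime q p ->
  in_pruefer p x -> x *+ q = 0 -> x = 0.
Proof.
move=> cqp [k /intrP[z Ez]] xq.
have : qval (x *+ q) = 0 by rewrite xq.
rewrite qvalMn /frac => /eqP; rewrite subr_eq0 => /eqP Exq.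
have [[u v] /= Euv] : exists uv : int * int, uv.1 * q + uv.2 * (p ^ k)%N = 1.
  by apply/coprimezP; rewrite coprimezE /= coprimeXr.
have E : (u%:~R * q%:R + v%:~R * (p ^ k)%:R : rat) = 1.
  by have := congr1 (fun t : int => (t%:~R : rat)) Euv; rewrite /= intrD !intrM.
apply: qz_inj; apply: int_num_01; last exact: qprop.
rewrite -[qval x]mulr1 -E mulrDr !mulrA ![qval x * _%:~R]mulrC -!mulrA Exq Ez.
by rewrite rpredD ?rpredM ?intr_int.
Qed.

Lemma pruefer_prod_divisible : divisible PrueferProd.
Proof.
move=> d n n0.
have [f fP] := choice (fun p => pruefer_divisible (svalP p) n0 (sgprop d p)).
exists (SubG pruefer_prod_closed (fun p => (fP p).1)).
apply: subg_inj; rewrite sgvalMn natmulfctE; apply: funext => p.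
exact: (fP p).2.
Qed.

Lemma pruefer_prod_injective : injective_ab PrueferProd.
Proof. exact/divisible_injective/pruefer_prod_divisible. Qed.

Lemma inv_prime_range (p : nat) : prime p -> 0 <= (p%:R : rat)^-1 < 1.
Proof.
move=> pp; rewrite invr_ge0 ler0n /= invf_lt1 ?ltr1n ?prime_gt1 //.
by rewrite ltr0n prime_gt0.
Qed.

Lemma pruefer_gen_proof (p : primes_t) (q : primes_t) :
  in_pruefer (sval q) (if q == p then QZ (inv_prime_range (svalP p)) else 0).
Proof.
case: eqP => [->|_]; last by exists 0%N; rewrite mul0r int_num0.
by exists 1%N; rewrite /= expn1 mulVf ?int_num1 // prime_natr_neq0 // (svalP p).
Qed.

Definition pruefer_gen (p : primes_t) : PrueferProd :=
  SubG pruefer_prod_closed (pruefer_gen_proof p).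

Lemma pruefer_genMn (p : primes_t) : pruefer_gen p *+ sval p = 0.
Proof.
apply: subg_inj; rewrite sgvalMn natmulfctE; apply: funext => q /=.
case: eqP => _; last by rewrite mul0rn.
by apply: qz_inj; rewrite qvalMn /= mulVf // prime_natr_neq0 // (svalP p).
Qed.

Lemma pruefer_gen_neq0 (p : primes_t) : pruefer_gen p != 0.
Proof.
apply/eqP => /(congr1 (fun d => qval (sgval d p))) /=; rewrite eqxx /=.
by move/eqP; rewrite invr_eq0 (negbTE (prime_natr_neq0 (svalP p))).
Qed.

Lemma pruefer_genMz (p : primes_t) k : ((sval p)%:Z %| k)%Z -> pruefer_gen p *~ k = 0.
Proof. by move=> /dvdzP[m ->]; rewrite mulrC mulrzA -pmulrn pruefer_genMn mul0rz. Qed.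

Lemma pruefer_prod_cogenerator : cogenerator_ab PrueferProd.
Proof.
move=> X x x0.
have [n [xn ndvd]] : exists n : nat, x *~ n = 0 /\ forall k, x *~ k = 0 -> (n %| k)%Z.
  apply: (int_subgroup_dvd (P := fun k => x *~ k = 0)); first exact: mulr0z.
  by move=> a b xa xb; rewrite mulrzBr xa xb subrr.
have n_neq1 : n != 1%N.
  by apply: contra x0 => /eqP n1; rewrite n1 in xn; rewrite -(mulr1z x) xn.
pose p := if (1 < n)%N then pdiv n else 2%N.
have pp : prime p by rewrite /p; case: ifP => // /pdiv_prime.
have annp k : x *~ k = 0 -> (p%:Z %| k)%Z.
  move=> /ndvd; rewrite /p; case: ltnP => [n_gt1|n_le1].
    by apply: dvdz_trans; rewrite dvdzE pdiv_dvd.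
  have -> : n = 0%N by move: n_le1 n_neq1; case: (n) => [|[]].
  by rewrite dvd0z => /eqP ->; rewrite dvdz0.
pose P : primes_t := exist _ p pp.
have ann k : x *~ k = 0 -> pruefer_gen P *~ k = 0.
  by move=> /annp; exact: (@pruefer_genMz P).
have [chi [hchi chix]] := injective_extend_cyclic pruefer_prod_injective ann.
by exists chi; split=> //; rewrite chix pruefer_gen_neq0.
Qed.

Lemma dualmap_morph (A B : zmodType) (f : A -> B) (hf : GRing.zmod_morphism f) :
  GRing.zmod_morphism (dualmap hf).
Proof. by move=> a b; apply: Hom_ext. Qed.

Lemma dualmap_epi (A B : zmodType) (f : A -> B) (hf : GRing.zmod_morphism f) :
  injective f -> epi_ab (dualmap hf).
Proof.
move=> f_inj chi; have [h [hh hK]] := pruefer_prod_injective hf f_inj (sgprop chi).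
by exists (mkHom hh); apply: Hom_ext => x /=.
Qed.

Lemma dual_inj_copresentation (F1 F0 N : zmodType) (zeta : F1 -> F0) (pi : F0 -> N)
    (hzeta : GRing.zmod_morphism zeta) (hpi : GRing.zmod_morphism pi) :
  free_ab F1 -> free_ab F0 -> epi_ab pi ->
  (forall y, pi y = 0 <-> exists x, zeta x = y) ->
  inj_copresentation (dualmap hpi) (dualmap hzeta).
Proof.
move=> fF1 fF0 pi_epi ker_pi; split; try exact: dualmap_morph.
- move=> a b eab; apply: Hom_ext => n; have [u <-] := pi_epi n.
  exact: (congr1 (fun f : dual F0 => sgval f u) eab).
- move=> chi; split=> [chi0|[t <-]]; last first.
    have pi_zeta x : pi (zeta x) = 0 by apply/ker_pi; exists x.
    by apply: Hom_ext => x /=; rewrite pi_zeta (zmorph0 (sgprop t)).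
  have chi_zeta x : sgval chi (zeta x) = 0.
    exact: (congr1 (fun f : dual F1 => sgval f x) chi0).
  have [t [ht tP]] := factor_through_coker hpi pi_epi ker_pi (sgprop chi) chi_zeta.
  by exists (mkHom ht); apply: Hom_ext => u /=.
- by split; apply: hom_free_injective => //; exact: pruefer_prod_injective.
Qed.

(** * The dual of M *)

Lemma genM_inv_prime (p : primes_t) : genM (sval p)%:R^-1.
Proof. by exists [:: (1, sval p)]; rewrite /= (svalP p) big_seq1 mul1r. Qed.

Definition Mgen (p : primes_t) : Mgrp := SubG genM_closed (genM_inv_prime p).

Lemma Mgrp_ind (P : Mgrp -> Prop) : zclosed P -> (forall p, P (Mgen p)) -> forall m, P m.
Proof.
move=> zP PM m; have [s [sP Em]] := sgprop m.
elim: s m sP Em => [|[k p] s IHs] m /=.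
  rewrite big_nil => _ m0; have -> : m = 0 by exact: subg_inj.
  exact: (zcl0 zP).
move=> /andP[pp sP]; rewrite big_cons /= => Em.
have genMs : genM (\sum_(x <- s) x.1%:~R / x.2%:R) by exists s.
have -> : m = Mgen (exist _ p pp) *~ k + SubG genM_closed genMs.
  by apply: subg_inj; rewrite /= Em sgvalMz /= -[_^-1 *~ k]mulrzr mulrC.
have Pk := zclosedMz zP k (PM (exist _ p pp)).
have Ps : P (SubG genM_closed genMs) by exact: IHs.
exact: (zclD zP Pk Ps).
Qed.

Lemma sgval_MgenMn (p : primes_t) : sgval (Mgen p *+ sval p) = 1.
Proof.
by rewrite sgvalMn /= -[_^-1 *+ _]mulr_natr mulVf // prime_natr_neq0 // (svalP p).
Qed.

Lemma MgenMn (p q : primes_t) : Mgen p *+ sval p = Mgen q *+ sval q.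
Proof. by apply: subg_inj; rewrite !sgval_MgenMn. Qed.

Definition dualM_eval (f : dual Mgrp) : PrueferProd :=
  SubG pruefer_prod_closed (fun p => sgprop (sgval f (Mgen p)) p).

Lemma dualM_eval_morph : GRing.zmod_morphism dualM_eval.
Proof. by move=> f g; apply: subg_inj. Qed.

Lemma dualM_eval_eq0 (f : dual Mgrp) : dualM_eval f = 0 -> f = 0.
Proof.
move=> f0; apply: Hom_ext => m; apply: subg_inj; apply: funext => p /=.
pose phi m := sgval (sgval f m) p.
have hphi : GRing.zmod_morphism phi by move=> a b; rewrite /phi (sgprop f).
have phi_p : phi (Mgen p) = 0 by exact: (congr1 (fun d => sgval d p) f0).
have phi_gen q : phi (Mgen q) = 0.
  have [<-|qp] := eqVneq p q; first exact: phi_p.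
  apply: (@pruefer_coprime_torsion (sval p) (sval q)); last first.
  - by rewrite -(zmorphMn hphi) (MgenMn q p) (zmorphMn hphi) phi_p mul0rn.
  - exact: (sgprop (sgval f (Mgen q)) p).
  - rewrite prime_coprime ?(svalP q) // dvdn_prime2 ?(svalP p) ?(svalP q) //.
    by apply: contra qp => /eqP/val_inj ->.
suff zphi : zclosed (fun m => phi m = 0) by exact: (Mgrp_ind zphi phi_gen).
by split=> [|a b pa pb]; rewrite ?(zmorph0 hphi) // hphi pa pb subrr.
Qed.

Lemma dualM_eval_inj : injective dualM_eval.
Proof.
move=> f g efg; apply/eqP; rewrite -subr_eq0; apply/eqP/dualM_eval_eq0.
by rewrite dualM_eval_morph efg subrr.
Qed.

Lemma dualM_eval_surj (d : PrueferProd) : exists f, dualM_eval f = d.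
Proof.
have ann p k : Mgen p *~ k = 0 -> d *~ k = 0.
  move=> /(congr1 (@sgval _ _ genM_closed)); rewrite sgvalMz /= -mulrzr => /eqP.
  rewrite mulf_eq0 invr_eq0 intr_eq0 (negbTE (prime_natr_neq0 (svalP p))) /=.
  by move=> /eqP ->; rewrite mulr0z.
have [g gP] := choice (fun p => injective_extend_cyclic pruefer_prod_injective (ann p)).
pose fm m := SubG pruefer_prod_closed (fun p => sgprop (g p m) p).
have hfm : GRing.zmod_morphism fm.
  by move=> a b; apply: subg_inj; apply: funext => p /=; rewrite (gP p).1.
by exists (mkHom hfm); apply: subg_inj; apply: funext => p /=; rewrite (gP p).2.
Qed.

Lemma dualM_isoAb : isoAb (dual Mgrp) PrueferProd.
Proof.
have [g gK] := choice dualM_eval_surj.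
exists dualM_eval; split; first exact: dualM_eval_morph.
by exists g => [f|//]; apply: dualM_eval_inj; rewrite gK.
Qed.

(** * A non-split extension of M by M *)

Definition psum (e : nat) (s : seq (int * nat)) : rat :=
  \sum_(x <- s) x.1%:~R / x.2%:R ^+ e.

Definition psum_at (p : nat) (s : seq (int * nat)) : rat :=
  \sum_(x <- s | x.2 == p) x.1%:~R.

Definition all_prime (s : seq (int * nat)) : bool := all (fun x => prime x.2) s.

Lemma psum_at_int p s : psum_at p s \is a Num.int.
Proof. by apply: rpred_sum => x _; exact: intr_int. Qed.

Lemma psum_split e p s :
  psum e s = psum_at p s / p%:R ^+ e + psum e [seq x <- s | x.2 != p].
Proof.
rewrite /psum (bigID (fun x => x.2 == p)) /= big_filter; congr (_ + _).
by rewrite /psum_at mulr_suml; apply: eq_bigr => x /eqP ->.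
Qed.

Lemma all_prime_filter (P : pred (int * nat)) s : all_prime s -> all_prime (filter P s).
Proof. by move=> sP; apply/allP => x; rewrite mem_filter => /andP[_ /(allP sP)]. Qed.

Lemma genM_psum1 s : all_prime s -> genM (psum 1 s).
Proof. by move=> sP; exists s; split=> //; apply: eq_bigr => x _; rewrite expr1. Qed.

Lemma genM_psum y : genM y -> exists2 s, all_prime s & y = psum 1 s.
Proof.
by move=> [s [sP ->]]; exists s => //; apply: eq_bigr => x _; rewrite expr1.
Qed.

Lemma psum1_denom_coprime p s : prime p -> all_prime s -> all (fun x => x.2 != p) s ->
  exists N : nat, coprime N p /\ psum 1 s * N%:R \is a Num.int.
Proof.
move=> pp; elim: s => [|[k q] s IHs] /=.
  by move=> _ _; exists 1%N; rewrite coprime1n /psum big_nil mul0r int_num0.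
move=> /andP[qp sP] /andP[q_neq sp]; have [N [cN sN]] := IHs sP sp.
exists (q * N)%N; split.
  by rewrite coprimeMl cN andbT prime_coprime // dvdn_prime2.
rewrite /psum big_cons /= -/(psum 1 s) mulrDl natrM expr1 mulrA mulfVK; last first.
  exact: prime_natr_neq0.
by rewrite rpredD ?(rpredM (intr_int _ _) (natr_int _ _)) // mulrCA rpredM ?natr_int.
Qed.

Lemma int_of_coprime_denom (c K : rat) (N p : nat) : c \is a Num.int ->
  K \is a Num.int -> coprime N p -> (c - K / p%:R) * N%:R \is a Num.int ->
  K / p%:R \is a Num.int.
Proof.
move=> ci Ki cNp h.
have [-> | p0] := eqVneq p 0%N; first by rewrite invr0 mulr0 int_num0.
have [[u v] /= Euv] : exists uv : int * int, uv.1 * N + uv.2 * p = 1.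
  by apply/coprimezP; rewrite coprimezE.
have E : (u%:~R * N%:R + v%:~R * p%:R : rat) = 1.
  by have := congr1 (fun t : int => (t%:~R : rat)) Euv; rewrite /= intrD !intrM.
have pn : (p%:R : rat) != 0 by rewrite pnatr_eq0.
(* Bezout: K/p = u (c N - (c - K/p) N) + v K *)
have -> : K / p%:R = u%:~R * (c * N%:R - (c - K / p%:R) * N%:R) + v%:~R * K.
  transitivity (K / p%:R * (u%:~R * N%:R + v%:~R * p%:R)); first by rewrite E mulr1.
  by field.
by rewrite rpredD ?rpredM ?intr_int ?Ki // rpredB ?(rpredM ci) ?natr_int.
Qed.

(* partial fractions: an integral sum of k/p splits prime by prime *)
Lemma genM_psum2 s : all_prime s -> psum 1 s \is a Num.int -> genM (psum 2 s).
Proof.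
move: {2}(size s) (leqnn (size s)) => n; elim: n s => [|n IHn] [|[k p] s1] //=;
  try by move=> *; exists [::]; rewrite /psum !big_nil.
move=> size_s /andP[pp s1P] s_int; set s := (k, p) :: s1 in s_int *.
set s' := [seq x <- s | x.2 != p].
have s'P : all_prime s' by apply: all_prime_filter; rewrite /= pp.
have [N [cN s'N]] := psum1_denom_coprime pp s'P (filter_all _ _).
have E1 := psum_split 1 p s; have E2 := psum_split 2 p s.
have Kp_int : psum_at p s / p%:R \is a Num.int.
  apply: int_of_coprime_denom s_int (psum_at_int p s) cN _.
  by rewrite E1 expr1 addrAC subrr add0r.
have s'_int : psum 1 s' \is a Num.int.
  have -> : psum 1 s' = psum 1 s - psum_at p s / p%:R.
    by rewrite E1 expr1 addrAC subrr add0r.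
  exact: rpredB.
have size_s' : (size s' <= n)%N.
  by rewrite size_filter /= eqxx /= add0n (leq_trans (count_size _ _)).
rewrite E2; apply: (zclD genM_closed) (IHn _ size_s' s'P s'_int).
move: Kp_int => /intrP[z Ez].
by rewrite expr2 invfM mulrA Ez; exists [:: (z, p)]; rewrite /= pp big_seq1.
Qed.

Lemma genM_denom (y : rat) (p : nat) : prime p -> genM y ->
  exists N : nat, coprime N p /\ y * p%:R * N%:R \is a Num.int.
Proof.
move=> pp /genM_psum[s sP ->].
have s'P : all_prime [seq x <- s | x.2 != p] by exact: all_prime_filter.
have [N [cN s'N]] := psum1_denom_coprime pp s'P (filter_all _ _).
exists N; split=> //; rewrite (psum_split 1 p) expr1 !mulrDl mulfVK ?prime_natr_neq0 //.
rewrite rpredD //; first by rewrite rpredM ?psum_at_int ?natr_int.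
by rewrite mulrAC rpredM ?natr_int.
Qed.

Lemma not_forall_genM_shift (r : rat) :
  ~ (forall p, prime p -> genM (r / p%:R - 1 / p%:R ^+ 2)).
Proof.
move=> rM; set u := numq r; set v := denq r.
have [p v_lt_p pp] := prime_above `|v|%N.
have [N [cN /intrP[w Ew]]] := genM_denom pp (rM p pp).
have v_neq0 : v%:~R != 0 :> rat by rewrite intr_eq0 denq_neq0.
have ru : r = u%:~R / v%:~R by rewrite divq_num_den.
have E : v * N%:Z = p%:Z * (u * N%:Z - w * v).
  apply: (intr_inj (R := rat)); rewrite !intrM intrB !intrM -Ew ru.
  rewrite -[(N%:Z)%:~R]/(N%:R : rat) -[(p%:Z)%:~R]/(p%:R : rat).
  by field; rewrite v_neq0 (prime_natr_neq0 pp).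
have : (p %| `|v| * N)%N.
  have : (p%:Z %| v * N%:Z)%Z by rewrite E dvdz_mulr.
  by rewrite dvdzE abszM.
rewrite Euclid_dvdM // => /orP[/dvdn_leq | pN].
  by rewrite absz_gt0 denq_neq0 => /(_ isT); rewrite leqNgt v_lt_p.
by move: cN; rewrite coprime_sym prime_coprime // pN.
Qed.

(* E <= Q x Q is generated by M x 0 and the pairs (1/p^2, 1/p); projecting to
   the second coordinate makes it an extension of M by M *)
Definition in_ext (z : rat * rat) : Prop :=
  exists2 s, all_prime s & z.2 = psum 1 s /\ genM (z.1 - psum 2 s).

Lemma psum_catN e s t :
  psum e (s ++ [seq (- x.1, x.2) | x <- t]) = psum e s - psum e t.
Proof.
rewrite /psum big_cat big_map /= -sumrN; congr (_ + _).
by apply: eq_bigr => x _; rewrite intrN mulNr.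
Qed.

Lemma ext_closed : zclosed in_ext.
Proof.
split.
  exists [::] => //; rewrite /psum !big_nil subr0; split=> //; exact: (zcl0 genM_closed).
move=> [a x] [b y] [s sP [/= -> sM]] [t tP [/= -> tM]].
exists (s ++ [seq (- x.1, x.2) | x <- t]).
  by rewrite /all_prime all_cat all_map; exact/andP.
rewrite !psum_catN; split=> //=.
have -> : a - b - (psum 2 s - psum 2 t) = (a - psum 2 s) - (b - psum 2 t) by ring.
exact: (zclB genM_closed sM tM).
Qed.

Definition Ext : zmodType := subg ext_closed.

Lemma ext_proj_proof (e : Ext) : genM (sgval e).2.
Proof. by have [s sP [-> _]] := sgprop e; exact: genM_psum1. Qed.

Definition ext_proj (e : Ext) : Mgrp := SubG genM_closed (ext_proj_proof e).

Lemma ext_incl_proof (m : Mgrp) : in_ext (sgval m, 0).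
Proof. by exists [::] => //; rewrite /psum !big_nil subr0; split=> //; exact: sgprop. Qed.

Definition ext_incl (m : Mgrp) : Ext := SubG ext_closed (ext_incl_proof m).

Lemma ext_proj_morph : GRing.zmod_morphism ext_proj.
Proof. by move=> e e'; apply: subg_inj. Qed.

Lemma ext_incl_morph : GRing.zmod_morphism ext_incl.
Proof.
by move=> m m'; apply: subg_inj; apply: injective_projections => //=; rewrite subrr.
Qed.

Lemma ext_incl_inj : injective ext_incl.
Proof. by move=> m m' /(congr1 (fun e => (sgval e).1)); exact: subg_inj. Qed.

Lemma ext_proj_epi : epi_ab ext_proj.
Proof.
move=> m; have [s sP Em] := genM_psum (sgprop m).
have e_in : in_ext (psum 2 s, sgval m).
  by exists s => //; split=> //; rewrite subrr; exact: (zcl0 genM_closed).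
by exists (SubG ext_closed e_in); apply: subg_inj.
Qed.

Lemma ext_proj_incl (m : Mgrp) : ext_proj (ext_incl m) = 0.
Proof. exact: subg_inj. Qed.

Lemma ext_proj_ker (e : Ext) : ext_proj e = 0 -> exists m, ext_incl m = e.
Proof.
move=> /(congr1 (@sgval _ _ genM_closed)) /= e2.
have [s sP [es sM]] := sgprop e.
have s2M : genM (psum 2 s) by apply: genM_psum2; rewrite // -es e2 int_num0.
have e1M : genM (sgval e).1.
  by rewrite -(subrK (psum 2 s) (sgval e).1); exact: (zclD genM_closed sM s2M).
exists (SubG genM_closed e1M); apply: subg_inj => /=.
by move: e2; case: (sgval e) => a x /= ->.
Qed.

Lemma ext_gen_proof (p : primes_t) :
  in_ext (1 / (sval p)%:R ^+ 2, (sval p)%:R^-1).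
Proof.
exists [:: (1, sval p)]; first by rewrite /all_prime /= (svalP p).
rewrite /psum !big_seq1 /= subrr expr1 mul1r; split=> //; exact: (zcl0 genM_closed).
Qed.

Definition ext_gen (p : primes_t) : Ext := SubG ext_closed (ext_gen_proof p).

Lemma ext_proj_nonsplit :
  ~ exists s : Mgrp -> Ext, GRing.zmod_morphism s /\ forall m, ext_proj (s m) = m.
Proof.
move=> [s [hs sK]].
pose two : primes_t := exist _ 2%N isT.
apply: (@not_forall_genM_shift (sgval (s (Mgen two *+ 2))).1) => p pp.
pose P : primes_t := exist _ p pp; set a := (sgval (s (Mgen P))).1.
have [m em] : exists m, ext_incl m = s (Mgen P) - ext_gen P.
  by apply: ext_proj_ker; rewrite ext_proj_morph sK; apply: subg_inj; rewrite /= subrr.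
have -> : (sgval (s (Mgen two *+ 2))).1 = a *+ p.
  by rewrite -(MgenMn P) (zmorphMn hs) sgvalMn (raddfMn fst).
rewrite -[a *+ p]mulr_natr mulfK ?prime_natr_neq0 //.
by have := sgprop m; rewrite [sgval m](congr1 (fun e => (sgval e).1) em).
Qed.

Theorem mainTheorem10 (F1 F0 : zmodType) (zeta : F1 -> F0) (pi : F0 -> Mgrp)
  (hzeta : GRing.zmod_morphism zeta) (hpi : GRing.zmod_morphism pi) :
  free_ab F1 -> free_ab F0 ->
  injective zeta -> epi_ab pi ->
  (forall y : F0, pi y = 0 <-> exists x : F1, zeta x = y) ->
  [/\ isoAb (dual Mgrp) PrueferProd,
      cosilting_wrt (dualmap hpi) (dualmap hzeta),
      (forall (P1 P0 : zmodType) (sigma : P1 -> P0),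
          proj_presentation Mgrp sigma -> ~ partial_silting_wrt Mgrp sigma) &
      Ext1_nonzero Mgrp zeta].
Proof.
move=> fF1 fF0 zeta_inj pi_epi ker_pi.
have isoD := isoAb_sym dualM_isoAb.
have no_D_class (P1 P0 : zmodType) (sigma : P1 -> P0) (p : P0 -> Mgrp) :
    GRing.zmod_morphism sigma -> GRing.zmod_morphism p -> epi_ab p ->
    (forall y, p y = 0 <-> exists x, sigma x = y) -> projective_ab P0 ->
    ~ D_class sigma Mgrp.
  move=> hsigma hp p_epi ker_p projP0 Dsigma; apply: ext_proj_nonsplit.
  apply: (split_of_D_class hsigma hp p_epi ker_p ext_incl_morph ext_proj_morph
    ext_incl_inj ext_proj_ker ext_proj_incl Dsigma).
  exact: projP0 ext_proj_morph ext_proj_epi hp.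
split.
- exact: dualM_isoAb.
- apply: cosilting_of_injective_cogenerator.
  + exact: dual_inj_copresentation.
  + exact: dualmap_epi.
  + exact: injective_ab_iso isoD pruefer_prod_injective.
  + exact: cogenerator_ab_iso isoD pruefer_prod_cogenerator.
- move=> P1 P0 sigma [_ projP0 hsigma [p [hp p_epi ker_p]]] [Dsigma _].
  exact: no_D_class hsigma hp p_epi ker_p projP0 Dsigma.
- apply: contrapT => split_zeta; apply: (no_D_class _ _ zeta pi) => //.
    exact: free_projective.
  move=> h hh; apply: contrapT => no_ext; apply: split_zeta.
  by exists h; split.
Qed.
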